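(* For every mixed graph $G$ without directed cycles, $\mathrm{nd}_{\mathrm m}(G^+)\le\mathrm{nd}_{\mathrm m}(G)$ and $\mathrm{cw}_{\mathrm m}(G^+)\le 4^{\mathrm{cw}_{\mathrm m}(G)}\cdot\mathrm{cw}_{\mathrm m}(G)$.
   Context: A mixed graph $G$ consists of a finite vertex set $V(G)$, a set $E(G)$ of undirected edges and a set $A(G)$ of directed arcs; it is simple and contains no directed cycle. The transitive closure $G^+$ is obtained by adding every arc $(u,v)$ such that $G$ has a directed path from $u$ to $v$, and removing any edge parallel to such an arc. $N^+(v)$, $N^-(v)$, $N^{\mathrm u}(v)$ denote out-, in- and undirected neighbors; $u,v$ have the same mixed type if $N^{\mathrm u}(u)\setminus\{v\}=N^{\mathrm u}(v)\setminus\{u\}$, $N^-(u)=N^-(v)$, $N^+(u)=N^+(v)$; $\mathrm{nd}_{\mathrm m}$ is the number of mixed types. The mixed cliquewidth $\mathrm{cw}_{\mathrm m}$ is the minimum number of labels needed to construct the graph using: create a new vertex with label $i$; disjoint union; $\eta_{i,j}$ ($i\ne j$): add an edge between every vertex labeled $i$ and every vertex labeled $j$; $\alpha_{i,j}$ ($i\ne j$): add an arc from every vertex labeled $i$ to every vertex labeled $j$; $\rho_{i\to j}$: rename label $i$ to $j$. *)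

From mathcomp Require Import all_boot.
Set Implicit Arguments. Unset Strict Implicit. Unset Printing Implicit Defensive.

Record mgraph (T : finType) := MGraph { medge : rel T; marc : rel T }.

Definition is_mixed_dag (T : finType) (G : mgraph T) : Prop :=
  [/\ (forall x y, medge G x y = medge G y x),
      (forall x, ~~ medge G x x),
      (forall x y, medge G x y -> ~~ marc G x y /\ ~~ marc G y x)
    & (forall x y, marc G x y -> ~~ connect (marc G) y x)].

Definition plus_arc (T : finType) (G : mgraph T) : rel T :=
  fun u v => [exists z, marc G u z && connect (marc G) z v].

Definition tclosure (T : finType) (G : mgraph T) : mgraph T :=
  MGraph (fun u v => [&& medge G u v, ~~ plus_arc G u v & ~~ plus_arc G v u])
         (plus_arc G).

Definition same_mtype (T : finType) (G : mgraph T) (u v : T) : bool :=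
  [&& [forall w, ((w != v) && medge G u w) == ((w != u) && medge G v w)],
      [forall w, marc G w u == marc G w v]
    & [forall w, marc G u w == marc G v w]].

Definition nd_m (T : finType) (G : mgraph T) : nat :=
  #|[set [set v | same_mtype G u v] | u : T]|.

(** * Mixed clique-width expressions; leaves name the actual vertices *)
Inductive cwexp (T : Type) :=
| CCreate of T & nat
| CUnion of cwexp T & cwexp T
| CEta of nat & nat & cwexp T
| CAlpha of nat & nat & cwexp T
| CRename of nat & nat & cwexp T.

Section Sem.
Variable T : eqType.

Fixpoint cw_verts (e : cwexp T) : seq T :=
  match e with
  | CCreate v _ => [:: v]
  | CUnion e1 e2 => cw_verts e1 ++ cw_verts e2
  | CEta _ _ e | CAlpha _ _ e | CRename _ _ e => cw_verts e
  end.

Fixpoint cw_lab (e : cwexp T) : T -> nat :=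
  match e with
  | CCreate _ i => fun _ => i
  | CUnion e1 e2 => fun x => if x \in cw_verts e1 then cw_lab e1 x else cw_lab e2 x
  | CEta _ _ e | CAlpha _ _ e => cw_lab e
  | CRename i j e => fun x => if cw_lab e x == i then j else cw_lab e x
  end.

Fixpoint cw_edge (e : cwexp T) : rel T :=
  match e with
  | CCreate _ _ => fun _ _ => false
  | CUnion e1 e2 => fun x y => cw_edge e1 x y || cw_edge e2 x y
  | CEta i j e => fun x y =>
      [|| cw_edge e x y,
          [&& x \in cw_verts e, y \in cw_verts e, cw_lab e x == i & cw_lab e y == j]
        | [&& x \in cw_verts e, y \in cw_verts e, cw_lab e x == j & cw_lab e y == i]]
  | CAlpha _ _ e | CRename _ _ e => cw_edge e
  end.

Fixpoint cw_arc (e : cwexp T) : rel T :=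
  match e with
  | CCreate _ _ => fun _ _ => false
  | CUnion e1 e2 => fun x y => cw_arc e1 x y || cw_arc e2 x y
  | CAlpha i j e => fun x y =>
      cw_arc e x y ||
      [&& x \in cw_verts e, y \in cw_verts e, cw_lab e x == i & cw_lab e y == j]
  | CEta _ _ e | CRename _ _ e => cw_arc e
  end.

Fixpoint cw_uses (k : nat) (e : cwexp T) : bool :=
  match e with
  | CCreate _ i => i < k
  | CUnion e1 e2 => cw_uses k e1 && cw_uses k e2
  | CEta i j e | CAlpha i j e => [&& i < k, j < k, i != j & cw_uses k e]
  | CRename i j e => [&& i < k, j < k & cw_uses k e]
  end.
End Sem.

(** e constructs G: every vertex created exactly once (so unions are disjoint),
    and the resulting edges/arcs are exactly those of G *)
Definition cw_constructs (T : finType) (G : mgraph T) (e : cwexp T) : Prop :=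
  [/\ uniq (cw_verts e), (forall v, v \in cw_verts e),
      (forall x y, cw_edge e x y = medge G x y)
    & (forall x y, cw_arc e x y = marc G x y)].

Definition cw_le (T : finType) (G : mgraph T) (k : nat) : Prop :=
  exists e : cwexp T, cw_uses k e /\ cw_constructs G e.

Definition is_cwm (T : finType) (G : mgraph T) (k : nat) : Prop :=
  cw_le G k /\ forall k', cw_le G k' -> k <= k'.

From mathcomp Require Import all_boot.
From Stdlib Require Import Classical.
Set Implicit Arguments. Unset Strict Implicit. Unset Printing Implicit Defensive.

(* Vertices of the same mixed type in G have the same out-neighbours in G^+, and also the
   same in-neighbours, since an arc of G^+ into u is a directed path whose last arc enters u;
   this gives the bound on nd_m.
   For clique-width, rebuild a k-expression e of G bottom-up.  In a subexpression t, give
   each vertex x the label (r0, profile of x in t), the profile being its label in t together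
   with the sets of labels of the vertices of t that x reaches and that reach x.  Later
   operations treat equally labelled vertices of t alike, so a path leaving t can be rerouted
   through any vertex with the label at which it exits: the profile of x determines its
   adjacencies in G^+ to all vertices outside t.  Hence at a union the edges and arcs of G^+
   between the two parts can be added label by label, and a third register lets the profiles
   be updated to the union.  As the own label lies in both sets there are k 4^(k-1) profiles,
   and 3 k 4^(k-1) <= k 4^k. *)

Section Subexpressions.
Variable T : eqType.
Implicit Types (e t f : cwexp T).

Fixpoint cw_sub t e : Prop :=
  t = e \/ match e with
           | CCreate _ _ => False
           | CUnion e1 e2 => cw_sub t e1 \/ cw_sub t e2
           | CEta _ _ e0 | CAlpha _ _ e0 | CRename _ _ e0 => cw_sub t e0
           end.

Lemma cw_sub_refl t : cw_sub t t.
Proof. by case: t => *; left. Qed.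

Lemma cw_sub_trans f t e : cw_sub f t -> cw_sub t e -> cw_sub f e.
Proof.
move=> Hft; elim: e => [v i|e1 IH1 e2 IH2|i j e IH|i j e IH|i j e IH] [<-|Hte] //; right => //.
- by case: Hte => [/IH1|/IH2]; [left|right].
all: exact: IH.
Qed.

Lemma cw_sub_unionl t1 t2 e : cw_sub (CUnion t1 t2) e -> cw_sub t1 e.
Proof. by apply: cw_sub_trans; right; left; apply: cw_sub_refl. Qed.

Lemma cw_sub_unionr t1 t2 e : cw_sub (CUnion t1 t2) e -> cw_sub t2 e.
Proof. by apply: cw_sub_trans; right; right; apply: cw_sub_refl. Qed.

Lemma cw_sub_rename i j t e : cw_sub (CRename i j t) e -> cw_sub t e.
Proof. by apply: cw_sub_trans; right; apply: cw_sub_refl. Qed.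

Lemma cw_sub_eta i j t e : cw_sub (CEta i j t) e -> cw_sub t e.
Proof. by apply: cw_sub_trans; right; apply: cw_sub_refl. Qed.

Lemma cw_sub_alpha i j t e : cw_sub (CAlpha i j t) e -> cw_sub t e.
Proof. by apply: cw_sub_trans; right; apply: cw_sub_refl. Qed.

Lemma cw_sub_verts t e : cw_sub t e -> {subset cw_verts t <= cw_verts e}.
Proof.
elim: e => [v i|e1 IH1 e2 IH2|i j e IH|i j e IH|i j e IH] [<-|Hte] x //= Hx.
rewrite mem_cat; case: Hte => [/IH1|/IH2] /(_ x Hx) ->; rewrite ?orbT //.
all: exact: IH Hte x Hx.
Qed.

Lemma cw_sub_uniq t e : cw_sub t e -> uniq (cw_verts e) -> uniq (cw_verts t).
Proof.
elim: e => [v i|e1 IH1 e2 IH2|i j e IH|i j e IH|i j e IH] [<-|Hte] //=.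
- by rewrite cat_uniq => /and3P[U1 _ U2]; case: Hte => [/IH1|/IH2]; apply.
all: exact: IH.
Qed.

Lemma cw_sub_uses k t e : cw_sub t e -> cw_uses k e -> cw_uses k t.
Proof.
elim: e => [v i|e1 IH1 e2 IH2|i j e IH|i j e IH|i j e IH] [<-|Hte] //=.
- by case/andP=> U1 U2; case: Hte => [/IH1|/IH2]; apply.
- by case/and4P=> _ _ _; apply: IH.
- by case/and4P=> _ _ _; apply: IH.
- by case/and3P=> _ _; apply: IH.
Qed.

Lemma cw_uses_lab k e x : cw_uses k e -> x \in cw_verts e -> cw_lab e x < k.
Proof.
elim: e => [v i|e1 IH1 e2 IH2|i j e IH|i j e IH|i j e IH] //=.
- case/andP=> U1 U2; rewrite mem_cat; case: ifP => [Hx _|Hx /orP[|]]; rewrite ?Hx //.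
  + exact: IH1.
  + exact: IH2.
- by case/and4P=> _ _ _ /IH.
- by case/and4P=> _ _ _ /IH.
- by case/and3P=> _ Hj /IH Hl Hx; case: eqP => // _; apply: Hl.
Qed.

Lemma cw_uses_gt0 k e : cw_uses k e -> 0 < k.
Proof.
elim: e => [v i|e1 IH1 e2 IH2|i j e IH|i j e IH|i j e IH] /=.
- exact: leq_ltn_trans.
- by case/andP=> /IH1.
- by case/and4P=> _ _ _ /IH.
- by case/and4P=> _ _ _ /IH.
- by case/and3P=> _ _ /IH.
Qed.

Lemma cw_arc_verts e x y : cw_arc e x y -> (x \in cw_verts e) && (y \in cw_verts e).
Proof.
elim: e => [v i|e1 IH1 e2 IH2|i j e IH|i j e IH|i j e IH] //=.
- by rewrite !mem_cat; case/orP => [/IH1|/IH2] /andP[-> ->]; rewrite ?orbT.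
- by case/orP => [/IH //|/and4P[-> ->]].
Qed.

Lemma cw_edge_verts e x y : cw_edge e x y -> (x \in cw_verts e) && (y \in cw_verts e).
Proof.
elim: e => [v i|e1 IH1 e2 IH2|i j e IH|i j e IH|i j e IH] //=.
- by rewrite !mem_cat; case/orP => [/IH1|/IH2] /andP[-> ->]; rewrite ?orbT.
- by case/or3P => [/IH //|/and4P[-> ->]|/and4P[-> ->]].
Qed.

Lemma cw_arc_in e x y :
  cw_arc e x y = [&& x \in cw_verts e, y \in cw_verts e & cw_arc e x y].
Proof. by case Hxy: (cw_arc e x y); rewrite ?andbF // andbT (cw_arc_verts Hxy). Qed.

Lemma cw_edge_in e x y :
  cw_edge e x y = [&& x \in cw_verts e, y \in cw_verts e & cw_edge e x y].
Proof. by case Hxy: (cw_edge e x y); rewrite ?andbF // andbT (cw_edge_verts Hxy). Qed.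

Lemma cw_rels_notin e x u : u \notin cw_verts e ->
  [/\ cw_arc e x u = false, cw_arc e u x = false, cw_edge e x u = false & cw_edge e u x = false].
Proof.
move=> /negbTE Hu.
by rewrite cw_arc_in [cw_arc e u x]cw_arc_in cw_edge_in [cw_edge e u x]cw_edge_in Hu !andbF.
Qed.

(* Renamings may merge labels but never separate them, so every later eta or alpha treats
   [z] and [z'] alike. *)
Lemma cw_sub_twins t e z z' : cw_sub t e -> uniq (cw_verts e) ->
  z \in cw_verts t -> z' \in cw_verts t -> cw_lab t z = cw_lab t z' ->
  cw_lab e z = cw_lab e z' /\ forall u, u \notin cw_verts t ->
  [/\ cw_arc e z u = cw_arc e z' u, cw_arc e u z = cw_arc e u z',
      cw_edge e z u = cw_edge e z' u & cw_edge e u z = cw_edge e u z'].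
Proof.
move=> + + Hz Hz' Hl.
elim: e => [v i|e1 IH1 e2 IH2|i j e IH|i j e IH|i j e IH] [<-|Hte] Ue;
  try by split=> // u /[dup] /(cw_rels_notin z) [-> -> -> ->] /(cw_rels_notin z') [-> -> -> ->].
- move: Ue; rewrite /= cat_uniq => /and3P[U1 /hasPn D21 U2].
  case: Hte => Hte.
  + have [Hz1 Hz1'] := (cw_sub_verts Hte Hz, cw_sub_verts Hte Hz').
    have [N2 N2'] : z \notin cw_verts e2 /\ z' \notin cw_verts e2.
      by split; apply/negP => /D21; rewrite ?Hz1 ?Hz1'.
    have [L R] := IH1 Hte U1; rewrite Hz1 Hz1'; split=> // u Hu.
    have [-> -> -> ->] := cw_rels_notin u N2; have [-> -> -> ->] := cw_rels_notin u N2'.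
    by rewrite !orbF; apply: R.
  + have [Hz2 Hz2'] := (cw_sub_verts Hte Hz, cw_sub_verts Hte Hz').
    have [N1 N1'] := (D21 _ Hz2, D21 _ Hz2').
    have [L R] := IH2 Hte U2; rewrite (negbTE N1) (negbTE N1'); split=> // u Hu.
    have [-> -> -> ->] := cw_rels_notin u N1; have [-> -> -> ->] := cw_rels_notin u N1'.
    exact: R.
- have [L R] := IH Hte Ue; split=> // u /R[/= -> -> -> ->].
  by rewrite (cw_sub_verts Hte Hz) (cw_sub_verts Hte Hz') L.
- have [L R] := IH Hte Ue; split=> // u /R[/= -> -> -> ->].
  by rewrite (cw_sub_verts Hte Hz) (cw_sub_verts Hte Hz') L.
- by have [L R] := IH Hte Ue; split; [rewrite /= L | move=> u /R].
Qed.

End Subexpressions.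

Section BatchOperations.
Variable T : eqType.
Implicit Types (f : cwexp T) (s : seq (nat * nat)).

Definition rename_all (D : seq nat) (sigma : nat -> nat) f : cwexp T :=
  foldr (fun n g => CRename n (sigma n) g) f D.

Definition add_edges s f : cwexp T := foldr (fun p g => CEta p.1 p.2 g) f s.

Definition add_arcs s f : cwexp T := foldr (fun p g => CAlpha p.1 p.2 g) f s.

Lemma rename_all_verts D sigma f : cw_verts (rename_all D sigma f) = cw_verts f.
Proof. by elim: D. Qed.

Lemma rename_all_edge D sigma f : cw_edge (rename_all D sigma f) = cw_edge f.
Proof. by elim: D. Qed.

Lemma rename_all_arc D sigma f : cw_arc (rename_all D sigma f) = cw_arc f.
Proof. by elim: D. Qed.

Lemma rename_all_lab D sigma f x : {in D, forall n, sigma n \notin D} ->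
  cw_lab (rename_all D sigma f) x =
    if cw_lab f x \in D then sigma (cw_lab f x) else cw_lab f x.
Proof.
elim: D => [|n D IH] //= HD.
rewrite IH => [|m Hm]; last first.
  by apply/negP => Hs; have := HD m; rewrite !inE Hm Hs !orbT => /(_ isT).
rewrite inE; case: (boolP (cw_lab f x \in D)) => Hl; last first.
  by rewrite orbF; case: eqP => [->|].
by have := HD (cw_lab f x); rewrite !inE Hl orbT negb_or => /(_ isT) /andP[/negbTE ->].
Qed.

Lemma rename_all_uses k D sigma f : all (fun n => (n < k) && (sigma n < k)) D ->
  cw_uses k f -> cw_uses k (rename_all D sigma f).
Proof. by elim: D => //= n D IH /andP[/andP[-> ->] /IH H] /H ->. Qed.

Lemma add_edges_verts s f : cw_verts (add_edges s f) = cw_verts f.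
Proof. by elim: s. Qed.

Lemma add_edges_lab s f : cw_lab (add_edges s f) = cw_lab f.
Proof. by elim: s. Qed.

Lemma add_edges_arc s f : cw_arc (add_edges s f) = cw_arc f.
Proof. by elim: s. Qed.

Lemma add_arcs_verts s f : cw_verts (add_arcs s f) = cw_verts f.
Proof. by elim: s. Qed.

Lemma add_arcs_lab s f : cw_lab (add_arcs s f) = cw_lab f.
Proof. by elim: s. Qed.

Lemma add_arcs_edge s f : cw_edge (add_arcs s f) = cw_edge f.
Proof. by elim: s. Qed.

Lemma add_edges_edge s f x y : cw_edge (add_edges s f) x y = cw_edge f x y ||
  [&& x \in cw_verts f, y \in cw_verts f &
      ((cw_lab f x, cw_lab f y) \in s) || ((cw_lab f y, cw_lab f x) \in s)].
Proof.
elim: s => [|[i j] s IH] /=; first by rewrite !andbF orbF.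
rewrite add_edges_verts add_edges_lab IH !inE !xpair_eqE.
by case: (cw_edge f x y); case: (x \in _); case: (y \in _); case: (_ \in s);
  case: (_ \in s); case: (_ == i); case: (_ == j); case: (_ == i); case: (_ == j).
Qed.

Lemma add_arcs_arc s f x y : cw_arc (add_arcs s f) x y = cw_arc f x y ||
  [&& x \in cw_verts f, y \in cw_verts f & (cw_lab f x, cw_lab f y) \in s].
Proof.
elim: s => [|[i j] s IH] /=; first by rewrite !andbF orbF.
rewrite add_arcs_verts add_arcs_lab IH !inE !xpair_eqE.
by case: (cw_arc f x y); case: (x \in _); case: (y \in _); case: (_ \in s);
  case: (_ == i); case: (_ == j).
Qed.

Lemma add_edges_uses k s f : all (fun p => [&& p.1 < k, p.2 < k & p.1 != p.2]) s ->
  cw_uses k f -> cw_uses k (add_edges s f).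
Proof. by elim: s => //= p s IH /andP[/and3P[-> -> ->] /IH H] /H ->. Qed.

Lemma add_arcs_uses k s f : all (fun p => [&& p.1 < k, p.2 < k & p.1 != p.2]) s ->
  cw_uses k f -> cw_uses k (add_arcs s f).
Proof. by elim: s => //= p s IH /andP[/and3P[-> -> ->] /IH H] /H ->. Qed.

End BatchOperations.

Lemma connect_cross (T : finType) (r : rel T) (P : pred T) x y :
  connect r x y -> P x -> ~~ P y ->
  exists z u, [/\ P z, ~~ P u, connect r x z, r z u & connect r u y].
Proof.
case/connectP => p; elim: p x => [|a p IH] x /= Hp Ey Px Py; first by rewrite Ey Px in Py.
case/andP: Hp => Hxa Hp; case: (boolP (P a)) => Pa.
- have [z [u [Pz Pu Caz Hzu Cuy]]] := IH a Hp Ey Pa Py.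
  by exists z, u; split=> //; apply: connect_trans Caz; apply: connect1.
- by exists x, a; split=> //; apply/connectP; exists p.
Qed.

Section TransitiveClosure.
Variables (T : finType) (G : mgraph T).
Local Notation reach := (connect (marc G)).

Lemma plus_arc_neq x y : x != y -> plus_arc G x y = reach x y.
Proof.
move=> Hxy; apply/existsP/idP => [[z /andP[Hxz Hzy]]|].
  exact: connect_trans (connect1 Hxz) Hzy.
case/connectP => [[|a p] /= Hp Ey]; first by rewrite Ey eqxx in Hxy.
by case/andP: Hp => Hxa Hp; exists a; rewrite Hxa; apply/connectP; exists p.
Qed.

Lemma plus_arc_irr x :
  (forall a b, marc G a b -> ~~ reach b a) -> ~~ plus_arc G x x.
Proof. by move=> acyc; apply/negP => /existsP[z /andP[/acyc/negP N /N]]. Qed.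

Lemma plus_arc_last x y : plus_arc G x y = [exists z, reach x z && marc G z y].
Proof.
apply/existsP/existsP => [[z /andP[Hxz]]|[z /andP[]]].
- case/connectP => p; case/lastP: p => [|p w] /=; first by move=> _ ->; exists x; rewrite connect0.
  rewrite rcons_path last_rcons => /andP[Hp Hw] Ey; exists (last z p).
  rewrite Ey Hw andbT; apply: connect_trans (connect1 Hxz) _.
  by apply/connectP; exists p.
- case/connectP => [[|a p] /= Hp ->] Hzy; first by exists y; rewrite Hzy connect0.
  by case/andP: Hp => Hxa Hp; exists a; rewrite Hxa; apply/connectP; exists (rcons p y);
    rewrite ?rcons_path ?Hp ?Hzy ?last_rcons.
Qed.

Lemma tclosure_edge_sym :
  (forall x y, medge G x y = medge G y x) ->
  forall x y, medge (tclosure G) x y = medge (tclosure G) y x.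
Proof. by move=> Hsym x y; rewrite /= Hsym [~~ plus_arc G x y && _]andbC. Qed.

Lemma same_mtype_tclosure u v : same_mtype G u v -> same_mtype (tclosure G) u v.
Proof.
case/and3P => /forallP Hedge /forallP Hin /forallP Hout.
have Pout w : plus_arc G u w = plus_arc G v w.
  by apply: eq_existsb => z; rewrite (eqP (Hout z)).
have Pin w : plus_arc G w u = plus_arc G w v.
  by rewrite !plus_arc_last; apply: eq_existsb => z; rewrite (eqP (Hin z)).
apply/and3P; split; apply/forallP => w /=; rewrite ?Pout ?Pin //.
by rewrite !andbA (eqP (Hedge w)).
Qed.

End TransitiveClosure.

Section MixedTypes.
Variables (T : finType) (H : mgraph T).
Hypotheses (Hsym : forall x y, medge H x y = medge H y x) (Hirr : forall x, ~~ medge H x x).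

Lemma same_mtype_refl u : same_mtype H u u.
Proof. by apply/and3P; split; apply/forallP. Qed.

Lemma same_mtype_sym u v : same_mtype H u v -> same_mtype H v u.
Proof.
by case/and3P => /forallP A /forallP B /forallP C; apply/and3P; split; apply/forallP => w;
  rewrite eq_sym.
Qed.

Lemma same_mtype_trans u v w : same_mtype H u v -> same_mtype H v w -> same_mtype H u w.
Proof.
case/and3P => /forallP A1 /forallP B1 /forallP C1.
case/and3P => /forallP A2 /forallP B2 /forallP C2.
apply/and3P; split; apply/forallP => x; last 2 first.
- by rewrite (eqP (B1 x)) (eqP (B2 x)).
- by rewrite (eqP (C1 x)) (eqP (C2 x)).
have [->|Nuv] := eqVneq u v; first exact: A2.
have [<-|Nvw] := eqVneq v w; first exact: A1.
have [<-|Nuw] := eqVneq u w; first by [].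
have [->|Nxu] := eqVneq x u; first by rewrite (negbTE (Hirr u)) andbF.
have [->|Nxw] := eqVneq x w; first by rewrite (negbTE (Hirr w)) andbF.
have [->|Nxv] := eqVneq x v; last first.
  by have := eqP (A1 x); have := eqP (A2 x); rewrite Nxv Nxu Nxw /= => <- <-.
have Euw : medge H u w = medge H v w.
  by have := eqP (A1 w); rewrite (eq_sym w v) Nvw (eq_sym w u) Nuw.
have Evu : medge H v u = medge H w u by have := eqP (A2 u); rewrite Nuw Nuv.
by rewrite /= Hsym Evu Hsym Euw Hsym.
Qed.

End MixedTypes.

Lemma leq_card_imset_coarser (aT rT : finType) (f g : aT -> rT) :
  (forall u u', g u = g u' -> f u = f u') -> #|f @: aT| <= #|g @: aT|.
Proof.
move=> Hfg; pose h S := if [pick u | g u == S] is Some u then f u else S.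
have -> : f @: aT = h @: (g @: aT).
  rewrite -imset_comp; apply: eq_imset => u; rewrite /h /=.
  by case: pickP => [u' /eqP /Hfg //|/(_ u)]; rewrite eqxx.
exact: leq_imset_card.
Qed.

Lemma nd_m_tclosure (T : finType) (G : mgraph T) :
  (forall x y, medge G x y = medge G y x) -> (forall x, ~~ medge G x x) ->
  nd_m (tclosure G) <= nd_m G.
Proof.
move=> Hsym Hirr.
have Hsym' := tclosure_edge_sym Hsym.
have Hirr' x : ~~ medge (tclosure G) x x by rewrite /= (negbTE (Hirr x)).
apply: leq_card_imset_coarser => u u' Huu'.
have /same_mtype_tclosure Hplus : same_mtype G u u'.
  have : u' \in [set v | same_mtype G u' v] by rewrite inE same_mtype_refl.
  by rewrite -Huu' inE.
apply/setP => v; rewrite !inE; apply/idP/idP.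
- exact: (same_mtype_trans Hsym' Hirr' (same_mtype_sym Hplus)).
- exact: (same_mtype_trans Hsym' Hirr' Hplus).
Qed.

Section Construction.
Variables (T : finType) (G : mgraph T) (e : cwexp T) (k : nat).
Hypotheses (HG : is_mixed_dag G) (He : cw_constructs G e) (He_uses : cw_uses k.+1 e).
Implicit Types (s t f : cwexp T) (x y z u : T).

Local Notation reach := (connect (marc G)).

Lemma cw_sub_lab_lt t z : cw_sub t e -> z \in cw_verts t -> cw_lab t z < k.+1.
Proof. by move=> Hs; apply: cw_uses_lab; apply: cw_sub_uses Hs He_uses. Qed.

Lemma inord_lab_inj t z z' : cw_sub t e -> z \in cw_verts t -> z' \in cw_verts t ->
  (inord (cw_lab t z) : 'I_k.+1) = inord (cw_lab t z') -> cw_lab t z = cw_lab t z'.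
Proof.
move=> Hs Hz Hz' /(congr1 val); rewrite /= !inordK //; exact: cw_sub_lab_lt.
Qed.

Lemma same_lab_twins t z z' u : cw_sub t e -> z \in cw_verts t -> z' \in cw_verts t ->
  cw_lab t z = cw_lab t z' -> u \notin cw_verts t ->
  [/\ marc G z u = marc G z' u, marc G u z = marc G u z',
      medge G z u = medge G z' u & medge G u z = medge G u z'].
Proof.
case: He => Ue _ Eedge Earc Hs Hz Hz' Hl Hu.
have [_ /(_ u Hu) [A B C D]] := cw_sub_twins Hs Ue Hz Hz' Hl.
by rewrite -!Eedge -!Earc.
Qed.

Section ReachLabels.
Variable a : rel T.
Hypothesis a_twins : forall t z z' u, cw_sub t e -> z \in cw_verts t -> z' \in cw_verts t ->
  cw_lab t z = cw_lab t z' -> u \notin cw_verts t -> a z u = a z' u.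

Definition reach_labs t x : {set 'I_k.+1} :=
  [set inord (cw_lab t z) | z in [pred z in cw_verts t | connect a x z]].

Lemma reach_labsP t x b : reflect
  (exists2 z, (z \in cw_verts t) && connect a x z & b = inord (cw_lab t z))
  (b \in reach_labs t x).
Proof. by apply: (iffP imsetP) => -[z]; rewrite ?inE => Hz ->; exists z. Qed.

Lemma reach_labs_self t x : x \in cw_verts t -> inord (cw_lab t x) \in reach_labs t x.
Proof. by move=> Hx; apply/reach_labsP; exists x; rewrite ?Hx ?connect0. Qed.

(* A path from [x] leaving [t] does so through an [a]-step out of some vertex of [t];
   a vertex of [t] with the same label is reached from [x'] and makes the same step. *)
Lemma reach_labs_connect t x x' y : cw_sub t e -> x \in cw_verts t ->
  reach_labs t x = reach_labs t x' -> y \notin cw_verts t -> connect a x y -> connect a x' y.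
Proof.
move=> Hs Hx Exx' Hy Hxy.
have [z [u [Hz Hu Hxz Hzu Huy]]] := connect_cross (P := fun w => w \in cw_verts t) Hxy Hx Hy.
have : inord (cw_lab t z) \in reach_labs t x'.
  by rewrite -Exx'; apply/reach_labsP; exists z; rewrite ?Hz.
case/reach_labsP => z' /andP[Hz' Hx'z'] /(inord_lab_inj Hs Hz Hz') Hl.
apply: connect_trans Hx'z' (connect_trans (connect1 _) Huy).
by rewrite -(a_twins Hs Hz Hz' Hl Hu).
Qed.

Lemma reach_labs_lift s t (phi : nat -> nat) x x' : cw_sub s e ->
  {subset cw_verts s <= cw_verts t} ->
  {in cw_verts s, forall z, cw_lab t z = phi (cw_lab s z)} ->
  x \in cw_verts s -> reach_labs s x = reach_labs s x' ->
  {subset reach_labs t x <= reach_labs t x'}.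
Proof.
move=> Hs Hst Hphi Hx Exx' b /reach_labsP[z /andP[Hz Hxz] ->].
have [Hzs|Hzs] := boolP (z \in cw_verts s).
- have : inord (cw_lab s z) \in reach_labs s x'.
    by rewrite -Exx'; apply/reach_labsP; exists z; rewrite ?Hzs ?Hxz.
  case/reach_labsP => z' /andP[Hz' Hx'z'] /(inord_lab_inj Hs Hzs Hz') Hl.
  by apply/reach_labsP; exists z'; rewrite ?Hst ?Hx'z' // !Hphi // Hl.
- apply/reach_labsP; exists z => //.
  by rewrite Hz; apply: reach_labs_connect Hs Hx Exx' Hzs Hxz.
Qed.

End ReachLabels.

Local Notation conv := [rel x y | marc G y x].
Local Notation out_labs := (reach_labs (marc G)).
Local Notation in_labs := (reach_labs conv).

Lemma marc_twins t z z' u : cw_sub t e -> z \in cw_verts t -> z' \in cw_verts t ->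
  cw_lab t z = cw_lab t z' -> u \notin cw_verts t -> marc G z u = marc G z' u.
Proof. by move=> Hs Hz Hz' Hl /(same_lab_twins Hs Hz Hz' Hl) []. Qed.

Lemma conv_twins t z z' u : cw_sub t e -> z \in cw_verts t -> z' \in cw_verts t ->
  cw_lab t z = cw_lab t z' -> u \notin cw_verts t -> conv z u = conv z' u.
Proof. by move=> Hs Hz Hz' Hl /(same_lab_twins Hs Hz Hz' Hl) []. Qed.

Lemma connect_conv x y : connect conv x y = reach y x.
Proof. exact: connect_rev. Qed.

(* Two vertices of [t] with the same profile have the same adjacencies in [G^+] to the
   vertices outside [t]. *)
Local Notation profile :=
  {c : 'I_k.+1 * {set 'I_k.+1} * {set 'I_k.+1} | (c.1.1 \in c.1.2) && (c.1.1 \in c.2)}.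

Definition profile0 : profile.
Proof. by exists (ord0, [set ord0], [set ord0]); rewrite /= !inE. Defined.

Definition profile_of t x : profile :=
  insubd profile0 (inord (cw_lab t x), out_labs t x, in_labs t x).

Lemma profile_ofE t x : x \in cw_verts t ->
  val (profile_of t x) = (inord (cw_lab t x), out_labs t x, in_labs t x).
Proof. by move=> Hx; rewrite insubdK //; apply/andP; split; apply: reach_labs_self. Qed.

Lemma eq_profile_of t x x' : cw_sub t e -> x \in cw_verts t -> x' \in cw_verts t ->
  profile_of t x = profile_of t x' <->
  [/\ cw_lab t x = cw_lab t x', out_labs t x = out_labs t x' & in_labs t x = in_labs t x'].
Proof.
move=> Hs Hx Hx'; split => [/(congr1 val)|[Hl Eo Ei]]; last first.
  by apply: val_inj; rewrite !profile_ofE // Hl Eo Ei.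
by rewrite !profile_ofE // => -[/(inord_lab_inj Hs Hx Hx')].
Qed.

Lemma profile_of_lift s t (phi : nat -> nat) x x' : cw_sub s e -> cw_sub t e ->
  {subset cw_verts s <= cw_verts t} ->
  {in cw_verts s, forall z, cw_lab t z = phi (cw_lab s z)} ->
  x \in cw_verts s -> x' \in cw_verts s ->
  profile_of s x = profile_of s x' -> profile_of t x = profile_of t x'.
Proof.
move=> Hs Ht Hst Hphi Hx Hx' /(eq_profile_of Hs Hx Hx') [Hl Eo Ei].
apply/(eq_profile_of Ht (Hst _ Hx) (Hst _ Hx')); split; first by rewrite !Hphi // Hl.
- apply/eqP; rewrite eqEsubset; apply/andP; split; apply/subsetP.
  + exact: (reach_labs_lift marc_twins Hs Hst Hphi Hx Eo).
  + exact: (reach_labs_lift marc_twins Hs Hst Hphi Hx' (esym Eo)).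
- apply/eqP; rewrite eqEsubset; apply/andP; split; apply/subsetP.
  + exact: (reach_labs_lift conv_twins Hs Hst Hphi Hx Ei).
  + exact: (reach_labs_lift conv_twins Hs Hst Hphi Hx' (esym Ei)).
Qed.

Definition lift_profile s t (c : profile) : profile :=
  if [pick x in cw_verts s | profile_of s x == c] is Some x then profile_of t x else c.

Lemma lift_profile_of s t (phi : nat -> nat) x : cw_sub s e -> cw_sub t e ->
  {subset cw_verts s <= cw_verts t} ->
  {in cw_verts s, forall z, cw_lab t z = phi (cw_lab s z)} ->
  x \in cw_verts s -> lift_profile s t (profile_of s x) = profile_of t x.
Proof.
move=> Hs Ht Hst Hphi Hx; rewrite /lift_profile.
case: pickP => [x' /andP[Hx' /eqP E]|/(_ x)]; last by rewrite Hx eqxx.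
exact: profile_of_lift Hs Ht Hst Hphi Hx' Hx E.
Qed.

Definition r0 : 'I_3 := @Ordinal 3 0 isT.
Definition r1 : 'I_3 := @Ordinal 3 1 isT.
Definition r2 : 'I_3 := @Ordinal 3 2 isT.

(* A label of the new expression is a register in ['I_3] paired with a profile. *)
Definition lbl (p : 'I_3 * profile) : nat := enum_rank p.
Definition num_labels := #|{: 'I_3 * profile}|.
Definition unlbl (n : nat) : 'I_3 * profile := nth (r0, profile0) (enum {: 'I_3 * profile}) n.

Lemma lbl_inj : injective lbl.
Proof. by move=> p q /ord_inj; apply: enum_rank_inj. Qed.

Lemma lblK : cancel lbl unlbl.
Proof. exact: nth_enum_rank. Qed.

Lemma lbl_lt p : lbl p < num_labels.
Proof. exact: ltn_ord. Qed.

Lemma eq_lbl p q : (lbl p == lbl q) = (p == q).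
Proof. exact: (inj_eq lbl_inj). Qed.

(* A profile is determined by its label [a] and by which of the other [k] labels its two
   sets contain, since both sets contain [a]. *)
Lemma card_profile : #|{: profile}| <= k.+1 * 4 ^ k.
Proof.
pose code (c : profile) : 'I_k.+1 * {set 'I_k} * {set 'I_k} :=
  let: (a, A, B) := val c in (a, [set j | lift a j \in A], [set j | lift a j \in B]).
have code_inj : injective code.
  move=> [[[a A] B] HAB] [[[a' A'] B'] HAB'] [Ea EA EB]; subst a'.
  have [/andP[Aa Ba] /andP[Aa' Ba']] := (HAB, HAB').
  apply: val_inj; congr (_, _, _); apply/setP => b; have [<-|/unlift_some[j -> _]] := eqVneq a b.
  - by rewrite Aa Aa'.
  - by have /setP/(_ j) := EA; rewrite !inE.
  - by rewrite Ba Ba'.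
  - by have /setP/(_ j) := EB; rewrite !inE.
have := leq_card code code_inj.
have card_sets : #|{: {set 'I_k}}| = 2 ^ k.
  by rewrite -cardsT -powersetT card_powerset cardsT card_ord.
by rewrite !card_prod card_ord card_sets -mulnA -expnMn.
Qed.

Lemma num_labels_le : num_labels <= 4 ^ k.+1 * k.+1.
Proof.
rewrite /num_labels card_prod card_ord expnS -mulnA [4 ^ k * _]mulnC.
exact: leq_mul (leqnSn 3) card_profile.
Qed.

Definition reg_labs (r : 'I_3) : seq nat := [seq lbl (r, c) | c <- enum {: profile}].

Lemma mem_reg_labs r q c : (lbl (q, c) \in reg_labs r) = (q == r).
Proof.
apply/mapP/eqP => [[c' _ /lbl_inj [->]] //|->].
by exists c; rewrite ?mem_enum.
Qed.

Definition relab (r r' : 'I_3) (h : profile -> profile) (n : nat) : nat :=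
  if n \in reg_labs r then lbl (r', h (unlbl n).2) else n.

Local Notation relabel r r' h := (rename_all (reg_labs r) (relab r r' h)).

Lemma relab_reg r r' h c : relab r r' h (lbl (r, c)) = lbl (r', h c).
Proof. by rewrite /relab mem_reg_labs eqxx lblK. Qed.

Lemma relab_other r r' h q c : q != r -> relab r r' h (lbl (q, c)) = lbl (q, c).
Proof. by rewrite /relab mem_reg_labs => /negbTE ->. Qed.

Lemma relabel_lab r r' h f x : r != r' ->
  cw_lab (relabel r r' h f) x = relab r r' h (cw_lab f x).
Proof.
move=> Hr; rewrite rename_all_lab; first by case: ifP => // Hn; rewrite /relab Hn.
by move=> n /mapP[c _ ->]; rewrite relab_reg mem_reg_labs eq_sym.
Qed.

Lemma relabel_uses r r' h f : cw_uses num_labels f -> cw_uses num_labels (relabel r r' h f).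
Proof.
apply: rename_all_uses; apply/allP => n /mapP[c _ ->].
by rewrite relab_reg !lbl_lt.
Qed.

Definition joins (D : rel profile) (r r' : 'I_3) : seq (nat * nat) :=
  [seq (lbl (r, c.1), lbl (r', c.2)) | c <- enum {: profile * profile} & D c.1 c.2].

Lemma mem_joins D r r' q q' c c' :
  ((lbl (q, c), lbl (q', c')) \in joins D r r') = [&& q == r, q' == r' & D c c'].
Proof.
apply/mapP/and3P => [[[d d'] /[!mem_filter] /andP[Dd _] [/lbl_inj[-> ->] /lbl_inj[-> ->]]] //|].
case=> /eqP -> /eqP -> Dcc'; exists (c, c') => //.
by rewrite mem_filter Dcc' mem_enum.
Qed.

Lemma joins_uses D r r' : r != r' ->
  all (fun p => [&& p.1 < num_labels, p.2 < num_labels & p.1 != p.2]) (joins D r r').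
Proof.
move=> Hr; apply/allP => p /mapP[c _ ->] /=.
by rewrite !lbl_lt eq_lbl xpair_eqE negb_and Hr.
Qed.

Definition profile_rel s1 s2 (rl : rel T) (c1 c2 : profile) : bool :=
  [exists x in cw_verts s1, exists y in cw_verts s2,
     [&& profile_of s1 x == c1, profile_of s2 y == c2 & rl x y]].

Definition profile_invariant s1 s2 (rl : rel T) : Prop :=
  forall x x' y y', x \in cw_verts s1 -> x' \in cw_verts s1 ->
    y \in cw_verts s2 -> y' \in cw_verts s2 ->
    profile_of s1 x = profile_of s1 x' -> profile_of s2 y = profile_of s2 y' ->
    rl x y = rl x' y'.

Lemma profile_relE s1 s2 rl x y : profile_invariant s1 s2 rl ->
  x \in cw_verts s1 -> y \in cw_verts s2 ->
  profile_rel s1 s2 rl (profile_of s1 x) (profile_of s2 y) = rl x y.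
Proof.
move=> Hinv Hx Hy; apply/existsP/idP => [|Hxy].
  case=> x' /andP[Hx' /existsP[y' /and4P[Hy' /eqP Ex /eqP Ey]]].
  by rewrite (Hinv x' x y' y).
by exists x; rewrite Hx; apply/existsP; exists y; rewrite Hy !eqxx.
Qed.

Section DisjointSubexpressions.
Variables s1 s2 : cwexp T.
Hypotheses (Hs1 : cw_sub s1 e) (Hs2 : cw_sub s2 e)
  (D12 : [disjoint cw_verts s1 & cw_verts s2]).

Lemma reach_invariant : profile_invariant s1 s2 reach.
Proof.
suff imp x x' y y' : x \in cw_verts s1 -> x' \in cw_verts s1 ->
    y \in cw_verts s2 -> y' \in cw_verts s2 ->
    profile_of s1 x = profile_of s1 x' -> profile_of s2 y = profile_of s2 y' ->
    reach x y -> reach x' y'.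
  by move=> x x' y y' Hx Hx' Hy Hy' Ex Ey; apply/idP/idP; apply: imp.
move=> Hx Hx' Hy Hy' /(eq_profile_of Hs1 Hx Hx') [_ Eo _] /(eq_profile_of Hs2 Hy Hy') [_ _ Ei].
move=> /(reach_labs_connect marc_twins Hs1 Hx Eo (negbT (disjointFl D12 Hy))) Hx'y.
rewrite -connect_conv.
apply: (reach_labs_connect conv_twins Hs2 Hy Ei (negbT (disjointFr D12 Hx'))).
by rewrite connect_conv.
Qed.

Lemma plus_arc_invariant : profile_invariant s1 s2 (plus_arc G).
Proof.
move=> x x' y y' Hx Hx' Hy Hy' Ex Ey.
have neq a b : a \in cw_verts s1 -> b \in cw_verts s2 -> a != b.
  by move=> Ha Hb; apply: contraTneq Hb => <-; rewrite (disjointFr D12 Ha).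
by rewrite !plus_arc_neq ?neq //; apply: reach_invariant.
Qed.

Lemma medge_invariant : profile_invariant s1 s2 (medge G).
Proof.
move=> x x' y y' Hx Hx' Hy Hy'.
move=> /(eq_profile_of Hs1 Hx Hx') [Lx _ _] /(eq_profile_of Hs2 Hy Hy') [Ly _ _].
have [_ _ -> _] := same_lab_twins Hs1 Hx Hx' Lx (negbT (disjointFl D12 Hy)).
by have [_ _ _ ->] := same_lab_twins Hs2 Hy Hy' Ly (negbT (disjointFr D12 Hx')).
Qed.

End DisjointSubexpressions.

Lemma tclosure_edge_invariant s1 s2 : cw_sub s1 e -> cw_sub s2 e ->
  [disjoint cw_verts s1 & cw_verts s2] -> profile_invariant s1 s2 (medge (tclosure G)).
Proof.
move=> Hs1 Hs2 D12 x x' y y' Hx Hx' Hy Hy' Ex Ey; rewrite /=.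
rewrite (medge_invariant Hs1 Hs2 D12 Hx Hx' Hy Hy' Ex Ey).
rewrite (plus_arc_invariant Hs1 Hs2 D12 Hx Hx' Hy Hy' Ex Ey).
by rewrite disjoint_sym in D12; rewrite (plus_arc_invariant Hs2 Hs1 D12 Hy Hy' Hx Hx' Ey Ex).
Qed.

Lemma reg_neq : ((r0 == r1) = false) * ((r1 == r0) = false) * ((r0 == r2) = false) *
  ((r2 == r0) = false) * ((r1 == r2) = false) * ((r2 == r1) = false).
Proof. by []. Qed.

Lemma cw_sub_union_disjoint t1 t2 :
  cw_sub (CUnion t1 t2) e -> [disjoint cw_verts t1 & cw_verts t2].
Proof.
case: He => Ue _ _ _ /cw_sub_uniq /(_ Ue).
by rewrite /= cat_uniq disjoint_sym disjoint_has => /and3P[].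
Qed.

Definition builds t f : Prop :=
  [/\ cw_verts f = cw_verts t,
      {in cw_verts t, forall x, cw_lab f x = lbl (r0, profile_of t x)},
      forall x y, cw_edge f x y =
        [&& x \in cw_verts t, y \in cw_verts t & medge (tclosure G) x y]
    & forall x y, cw_arc f x y =
        [&& x \in cw_verts t, y \in cw_verts t & plus_arc G x y]].

Definition create_step v i : cwexp T := CCreate v (lbl (r0, profile_of (CCreate v i) v)).

Lemma create_step_builds v i : builds (CCreate v i) (create_step v i).
Proof.
have [_ Hirr _ acyc] := HG.
split=> // [x|x y|x y]; rewrite /= ?inE; first by move/eqP ->.
- by case: eqP => // ->; case: eqP => // ->; rewrite (negbTE (Hirr v)).
- by case: eqP => // ->; case: eqP => // ->; rewrite (negbTE (plus_arc_irr v acyc)).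
Qed.

Definition rename_step i j t f : cwexp T :=
  relabel r2 r0 id (relabel r0 r2 (lift_profile t (CRename i j t)) f).

Lemma rename_step_builds i j t f :
  cw_sub (CRename i j t) e -> builds t f -> builds (CRename i j t) (rename_step i j t f).
Proof.
move=> Hs [Vf Lf Ef Af]; have Ht := cw_sub_rename Hs.
split=> [|x Hx|x y|x y]; rewrite ?rename_all_verts ?rename_all_edge ?rename_all_arc //.
rewrite !relabel_lab ?reg_neq // Lf // relab_reg relab_reg.
by rewrite (@lift_profile_of _ _ (fun n => if n == i then j else n)).
Qed.

(* The parts sit in registers [r0] and [r1] while the edges and arcs between them are added
   by profiles; the profiles are then updated to the union, passing through [r2]. *)
Definition union_step t1 t2 f1 f2 : cwexp T :=
  let t := CUnion t1 t2 in
  relabel r2 r0 id (relabel r1 r2 (lift_profile t2 t) (relabel r0 r2 (lift_profile t1 t)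
    (add_arcs (joins (profile_rel t1 t2 (plus_arc G)) r0 r1 ++
               joins (profile_rel t2 t1 (plus_arc G)) r1 r0)
      (add_edges (joins (profile_rel t1 t2 (medge (tclosure G))) r0 r1)
        (CUnion f1 (relabel r0 r1 id f2)))))).

Section UnionStep.
Variables t1 t2 f1 f2 : cwexp T.
Hypotheses (Hs : cw_sub (CUnion t1 t2) e) (B1 : builds t1 f1) (B2 : builds t2 f2).

Local Notation t := (CUnion t1 t2).
Local Notation u := (CUnion f1 (relabel r0 r1 id f2)).

Let Hs1 : cw_sub t1 e := cw_sub_unionl Hs.
Let Hs2 : cw_sub t2 e := cw_sub_unionr Hs.
Let D12 : [disjoint cw_verts t1 & cw_verts t2] := cw_sub_union_disjoint Hs.
Let D21 : [disjoint cw_verts t2 & cw_verts t1] := etrans (disjoint_sym _ _) D12.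

Lemma union_verts : cw_verts u = cw_verts t.
Proof. by case: B1 => V1 _ _ _; case: B2 => V2 _ _ _; rewrite /= rename_all_verts V1 V2. Qed.

Lemma union_lab_l x : x \in cw_verts t1 -> cw_lab u x = lbl (r0, profile_of t1 x).
Proof. by case: B1 => V1 L1 _ _ Hx; rewrite /= V1 Hx L1. Qed.

Lemma union_lab_r x : x \in cw_verts t2 -> cw_lab u x = lbl (r1, profile_of t2 x).
Proof.
case: B1 B2 => V1 _ _ _ [_ L2 _ _] Hx.
by rewrite /= V1 (disjointFl D12 Hx) relabel_lab // L2 // relab_reg.
Qed.

Lemma union_step_verts : cw_verts (union_step t1 t2 f1 f2) = cw_verts t.
Proof. by rewrite !rename_all_verts add_arcs_verts add_edges_verts union_verts. Qed.

Lemma union_step_lab x :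
  x \in cw_verts t -> cw_lab (union_step t1 t2 f1 f2) x = lbl (r0, profile_of t x).
Proof.
move=> Ht; rewrite !relabel_lab ?reg_neq // add_arcs_lab add_edges_lab.
have /orP[Hx|Hx] : (x \in cw_verts t1) || (x \in cw_verts t2) by rewrite -mem_cat.
- rewrite union_lab_l // relab_reg relab_other ?reg_neq // relab_reg.
  by rewrite (@lift_profile_of _ _ id) // => z Hz; rewrite /= ?mem_cat Hz.
- rewrite union_lab_r // relab_other ?reg_neq // relab_reg relab_reg.
  by rewrite (@lift_profile_of _ _ id) // => z Hz;
    rewrite /= ?mem_cat ?Hz ?orbT ?(disjointFl D12 Hz).
Qed.

Lemma union_edge x y : cw_edge u x y =
  [&& x \in cw_verts t1, y \in cw_verts t1 & medge (tclosure G) x y] ||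
  [&& x \in cw_verts t2, y \in cw_verts t2 & medge (tclosure G) x y].
Proof. by case: B1 B2 => _ _ E1 _ [_ _ E2 _]; rewrite /= E1 rename_all_edge E2. Qed.

Lemma union_arc x y : cw_arc u x y =
  [&& x \in cw_verts t1, y \in cw_verts t1 & plus_arc G x y] ||
  [&& x \in cw_verts t2, y \in cw_verts t2 & plus_arc G x y].
Proof. by case: B1 B2 => _ _ _ A1 [_ _ _ A2]; rewrite /= A1 rename_all_arc A2. Qed.

Lemma union_step_edge x y : cw_edge (union_step t1 t2 f1 f2) x y =
  [&& x \in cw_verts t, y \in cw_verts t & medge (tclosure G) x y].
Proof.
rewrite cw_edge_in union_step_verts; apply: andb_id2l => Hxt; apply: andb_id2l => Hyt.
rewrite !rename_all_edge add_arcs_edge add_edges_edge union_edge union_verts Hxt Hyt.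
have Hinv := tclosure_edge_invariant Hs1 Hs2 D12.
have /orP[Hx|Hx] : (x \in cw_verts t1) || (x \in cw_verts t2) by rewrite -mem_cat.
all: have /orP[Hy|Hy] : (y \in cw_verts t1) || (y \in cw_verts t2) by rewrite -mem_cat.
- by rewrite !union_lab_l // !mem_joins !reg_neq Hx Hy (disjointFr D12 Hx) !andbF !orbF.
- rewrite (union_lab_l Hx) (union_lab_r Hy) !mem_joins !reg_neq !eqxx profile_relE //.
  by rewrite Hx Hy (disjointFr D12 Hx) (disjointFl D12 Hy) !andbF !orbF.
- rewrite (union_lab_r Hx) (union_lab_l Hy) !mem_joins !reg_neq !eqxx profile_relE //.
  rewrite Hx Hy (disjointFl D12 Hx) (disjointFr D12 Hy) !andbF /=.
  by case: HG => Hsym _ _ _; apply: tclosure_edge_sym.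
- by rewrite !union_lab_r // !mem_joins !reg_neq Hx Hy (disjointFl D12 Hx) !andbF !orbF.
Qed.

Lemma union_step_arc x y : cw_arc (union_step t1 t2 f1 f2) x y =
  [&& x \in cw_verts t, y \in cw_verts t & plus_arc G x y].
Proof.
rewrite cw_arc_in union_step_verts; apply: andb_id2l => Hxt; apply: andb_id2l => Hyt.
rewrite !rename_all_arc add_arcs_arc add_edges_arc add_edges_verts add_edges_lab.
rewrite union_arc union_verts Hxt Hyt mem_cat.
have Hinv12 := plus_arc_invariant Hs1 Hs2 D12.
have Hinv21 := plus_arc_invariant Hs2 Hs1 D21.
have /orP[Hx|Hx] : (x \in cw_verts t1) || (x \in cw_verts t2) by rewrite -mem_cat.
all: have /orP[Hy|Hy] : (y \in cw_verts t1) || (y \in cw_verts t2) by rewrite -mem_cat.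
- by rewrite !union_lab_l // !mem_joins !reg_neq Hx Hy (disjointFr D12 Hx) !andbF !orbF.
- rewrite (union_lab_l Hx) (union_lab_r Hy) !mem_joins !reg_neq !eqxx profile_relE //.
  by rewrite Hx Hy (disjointFr D12 Hx) (disjointFl D12 Hy) !andbF !orbF.
- rewrite (union_lab_r Hx) (union_lab_l Hy) !mem_joins !reg_neq !eqxx profile_relE //.
  by rewrite Hx Hy (disjointFl D12 Hx) (disjointFr D12 Hy) !andbF.
- by rewrite !union_lab_r // !mem_joins !reg_neq Hx Hy (disjointFl D12 Hx) !andbF !orbF.
Qed.

Lemma union_step_builds : builds t (union_step t1 t2 f1 f2).
Proof.
split; [exact: union_step_verts | exact: union_step_lab | exact: union_step_edge
       | exact: union_step_arc].
Qed.

End UnionStep.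

Fixpoint closure_exp t : cwexp T :=
  match t with
  | CCreate v i => create_step v i
  | CUnion t1 t2 => union_step t1 t2 (closure_exp t1) (closure_exp t2)
  | CEta _ _ t0 | CAlpha _ _ t0 => closure_exp t0
  | CRename i j t0 => rename_step i j t0 (closure_exp t0)
  end.

Lemma closure_exp_builds t : cw_sub t e -> builds t (closure_exp t).
Proof.
elim: t => [v i|t1 IH1 t2 IH2|i j t IH|i j t IH|i j t IH] Hs /=.
- exact: create_step_builds.
- exact: union_step_builds Hs (IH1 (cw_sub_unionl Hs)) (IH2 (cw_sub_unionr Hs)).
- exact: IH (cw_sub_eta Hs).
- exact: IH (cw_sub_alpha Hs).
- exact: rename_step_builds Hs (IH (cw_sub_rename Hs)).
Qed.

Lemma closure_exp_uses t : cw_uses num_labels (closure_exp t).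
Proof.
elim: t => [v i|t1 IH1 t2 IH2|i j t IH|i j t IH|i j t IH] //=.
- exact: lbl_lt.
- do 3!apply: relabel_uses; apply: add_arcs_uses; first by rewrite all_cat !joins_uses.
  apply: add_edges_uses; first exact: joins_uses.
  by rewrite /= IH1 relabel_uses.
- by do 2!apply: relabel_uses.
Qed.

Lemma tclosure_cw_le : cw_le (tclosure G) num_labels.
Proof.
have [Ue Hall _ _] := He; have [V _ E A] := closure_exp_builds (cw_sub_refl e).
exists (closure_exp e); split; first exact: closure_exp_uses.
by split=> [|v|x y|x y]; rewrite ?V ?E ?A ?Hall.
Qed.

End Construction.

Lemma ex_minimal (P : nat -> Prop) n :
  P n -> exists m, [/\ P m, m <= n & forall j, P j -> m <= j].
Proof.
elim/ltn_ind: n => n IH Pn.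
have [[j [Pj ltjn]]|Nj] := classic (exists j, P j /\ j < n).
  have [m [Pm lemj minm]] := IH j ltjn Pj.
  by exists m; split=> //; apply: leq_trans lemj (ltnW ltjn).
by exists n; split=> // j Pj; rewrite leqNgt; apply/negP => ltjn; apply: Nj; exists j.
Qed.

Theorem mainTheorem18 (T : finType) (G : mgraph T) :
  is_mixed_dag G ->
  nd_m (tclosure G) <= nd_m G /\
  (forall k, is_cwm G k -> exists k', is_cwm (tclosure G) k' /\ k' <= 4 ^ k * k).
Proof.
move=> HG; have [Hsym Hirr _ _] := HG; split; first exact: nd_m_tclosure.
move=> [|k] [[f [Hf Hc]] _]; first by have := cw_uses_gt0 Hf.
have [m [Hm lem minm]] := ex_minimal (tclosure_cw_le HG Hc Hf).
by exists m; split; [split | apply: leq_trans lem (num_labels_le k)].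
Qed.
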